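(* Let $\tau>2$ and $h>0$. Let $p>q$ be real numbers and $\alpha_p,\alpha_q$ nonzero complex numbers, and suppose there is a constant $C_\tau>0$ such that for all $a,b\in\mathbb{C}$, $$|a|^2+|b|^2\le C_\tau\int_0^\tau\left[\frac1{h^2}\left|a\alpha_pe^{ipt}+b\alpha_qe^{iqt}\right|^2+\left|a\alpha_p\,p\,e^{ipt}+b\alpha_q\,q\,e^{iqt}\right|^2\right]dt.$$ Then $$|p-q|\ge\sqrt{\frac{\frac1{2C_\tau\tau}\left(\frac1{|\alpha_p|^2}+\frac1{|\alpha_q|^2}\right)}{1+\frac16\tau^2\left(\frac1{h^2}+2(|q|^2+|p|^2)\right)}}.$$ *)

From Stdlib Require Import Reals.
From Coquelicot Require Import Coquelicot.
Open Scope R_scope.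

Definition cexpi (x : R) : C := (cos x, sin x).

Definition obs_integrand (h p q : R) (alp alq a b : C) (t : R) : R :=
  / h ^ 2 * (Cmod (a * alp * cexpi (p * t) + b * alq * cexpi (q * t))%C) ^ 2
  + (Cmod (a * alp * RtoC p * cexpi (p * t) + b * alq * RtoC q * cexpi (q * t))%C) ^ 2.

From Stdlib Require Import Reals Lra.
From Coquelicot Require Import Coquelicot.
Open Scope R_scope.

(* Test the inequality with a = 1/alp and b = -1/alq: the left side becomes
   1/|alp|^2 + 1/|alq|^2, while the integrand becomes
   (p - q)^2 + (1/h^2 + p q) (2 - 2 cos ((p - q) t)), which is O((p - q)^2)
   because 2 - 2 cos u <= u^2. *)

Lemma sin_pow2_le (x : R) : sin x ^ 2 <= x ^ 2.
Proof.
pose proof (SIN_bound x); pose proof PI2_3_2.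
destruct (Rle_lt_dec 1 (x ^ 2)); [nra|].
destruct (Rtotal_order x 0) as [Hx | [-> | Hx]].
- pose proof (sin_gt_x x Hx); pose proof (sin_lt_0_var x ltac:(nra) Hx); nra.
- rewrite sin_0; lra.
- pose proof (sin_lt_x x Hx); pose proof (sin_gt_0 x Hx ltac:(nra)); nra.
Qed.

Lemma two_sub_two_cos_le (u : R) : 2 - 2 * cos u <= u ^ 2.
Proof.
replace u with (2 * (u / 2)) at 1 by field.
rewrite cos_2a_sin; unfold Rsqr.
pose proof (sin_pow2_le (u / 2)); nra.
Qed.

Lemma Cmod_cexpi_lincomb_sq (x y u v : R) :
  Cmod (RtoC x * cexpi u + RtoC y * cexpi v)%C ^ 2
  = x ^ 2 + y ^ 2 + 2 * x * y * cos (u - v).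
Proof.
unfold Cmod, cexpi.
rewrite pow2_sqrt by (apply Rplus_le_le_0_compat; apply pow2_ge_0).
simpl; rewrite cos_minus.
pose proof (sin2_cos2 u) as Hu; pose proof (sin2_cos2 v) as Hv; unfold Rsqr in *.
transitivity (x ^ 2 * (sin u * sin u + cos u * cos u)
              + y ^ 2 * (sin v * sin v + cos v * cos v)
              + 2 * x * y * (cos u * cos v + sin u * sin v)); [ring|].
rewrite Hu, Hv; ring.
Qed.

Lemma obs_integrand_inv_coef (h p q : R) (alp alq : C) (t : R) :
  alp <> 0%C -> alq <> 0%C ->
  obs_integrand h p q alp alq (/ alp) (- / alq) t
  = (p - q) ^ 2 + (/ h ^ 2 + p * q) * (2 - 2 * cos ((p - q) * t)).
Proof.
intros Hp Hq; unfold obs_integrand.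
replace (/ alp * alp * cexpi (p * t) + - / alq * alq * cexpi (q * t))%C
  with (RtoC 1 * cexpi (p * t) + RtoC (- (1)) * cexpi (q * t))%C
  by (rewrite RtoC_opp; field; auto).
replace (/ alp * alp * p * cexpi (p * t) + - / alq * alq * q * cexpi (q * t))%C
  with (RtoC p * cexpi (p * t) + RtoC (- q) * cexpi (q * t))%C
  by (rewrite RtoC_opp; field; auto).
rewrite !Cmod_cexpi_lincomb_sq.
replace (p * t - q * t) with ((p - q) * t) by ring.
ring.
Qed.

Lemma beat_integrand_le (c p q t : R) : 0 <= c ->
  (p - q) ^ 2 + (c + p * q) * (2 - 2 * cos ((p - q) * t))
  <= (p - q) ^ 2 + (p - q) ^ 2 * (c + (p ^ 2 + q ^ 2) / 2) * t ^ 2.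
Proof.
intros Hc.
pose proof (two_sub_two_cos_le ((p - q) * t)) as Hle.
pose proof (COS_bound ((p - q) * t)).
set (X := 2 - 2 * cos ((p - q) * t)) in *.
assert (HX : 0 <= X) by (unfold X; lra).
pose proof (pow2_ge_0 (p - q)); pose proof (pow2_ge_0 p); pose proof (pow2_ge_0 q).
assert (Hpq : c + p * q <= c + (p ^ 2 + q ^ 2) / 2) by nra.
assert (Hm : 0 <= c + (p ^ 2 + q ^ 2) / 2) by lra.
apply Rplus_le_compat_l.
apply Rle_trans with ((c + (p ^ 2 + q ^ 2) / 2) * X); [nra|].
replace ((p - q) ^ 2 * (c + (p ^ 2 + q ^ 2) / 2) * t ^ 2)
  with ((c + (p ^ 2 + q ^ 2) / 2) * ((p - q) * t) ^ 2) by ring.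
apply Rmult_le_compat_l; assumption.
Qed.

Lemma RInt_const_plus_mul_sq (a b x : R) :
  RInt (fun t => a + b * t ^ 2) 0 x = a * x + b * x ^ 3 / 3.
Proof.
apply is_RInt_unique.
assert (E : a * x + b * x ^ 3 / 3 = (a * x + b * x ^ 3 / 3) - (a * 0 + b * 0 ^ 3 / 3))
  by field.
rewrite E.
apply (is_RInt_derive (fun t => a * t + b * t ^ 3 / 3)).
- intros t _; auto_derive; [auto | field].
- intros t _; apply (ex_derive_continuous (K := R_AbsRing) (V := R_NormedModule)).
  auto_derive; auto.
Qed.

Lemma beat_integral_le (c p q tau : R) : 0 <= c -> 0 <= tau ->
  RInt (fun t => (p - q) ^ 2 + (c + p * q) * (2 - 2 * cos ((p - q) * t))) 0 tau
  <= 2 * tau * (1 + / 6 * tau ^ 2 * (c + 2 * (q ^ 2 + p ^ 2))) * (p - q) ^ 2.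
Proof.
intros Hc Htau.
pose proof (pow2_ge_0 p); pose proof (pow2_ge_0 q); pose proof (pow2_ge_0 (p - q)).
set (m := c + (p ^ 2 + q ^ 2) / 2).
apply Rle_trans with ((p - q) ^ 2 * tau + (p - q) ^ 2 * m * tau ^ 3 / 3).
- rewrite <- RInt_const_plus_mul_sq.
  apply RInt_le; [lra | | | intros t _; apply beat_integrand_le; lra];
    apply (ex_RInt_continuous (V := R_CompleteNormedModule)); intros t _;
    apply (ex_derive_continuous (K := R_AbsRing) (V := R_NormedModule));
    auto_derive; auto.
- assert (E : 2 * tau * (1 + / 6 * tau ^ 2 * (c + 2 * (q ^ 2 + p ^ 2))) * (p - q) ^ 2
              - ((p - q) ^ 2 * tau + (p - q) ^ 2 * m * tau ^ 3 / 3)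
              = (p - q) ^ 2 * tau * (1 + tau ^ 2 * (p ^ 2 + q ^ 2) / 2))
    by (unfold m; field).
  assert (0 <= tau ^ 2 * (p ^ 2 + q ^ 2)) by (apply Rmult_le_pos; [apply pow2_ge_0 | lra]).
  assert (0 <= (p - q) ^ 2 * tau * (1 + tau ^ 2 * (p ^ 2 + q ^ 2) / 2))
    by (apply Rmult_le_pos; [apply Rmult_le_pos |]; lra).
  lra.
Qed.

Lemma sqrt_scaled_le_Rabs (s k1 k2 d : R) :
  0 < k1 -> 0 < k2 -> s <= k1 * k2 * d ^ 2 -> sqrt (/ k1 * s / k2) <= Rabs d.
Proof.
intros Hk1 Hk2 Hs.
rewrite <- sqrt_Rsqr_abs, Rsqr_pow2.
apply sqrt_le_1_alt.
replace (d ^ 2) with (/ k1 * (k1 * k2 * d ^ 2) / k2) by (field; lra).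
apply Rmult_le_compat_r; [left; apply Rinv_0_lt_compat; lra|].
apply Rmult_le_compat_l; [left; apply Rinv_0_lt_compat; lra|].
exact Hs.
Qed.

Theorem lemma5 (tau h p q : R) (alp alq : C) (Ctau : R) :
  tau > 2 -> h > 0 -> p > q -> alp <> 0%C -> alq <> 0%C -> Ctau > 0 ->
  (forall a b : C,
     (Cmod a) ^ 2 + (Cmod b) ^ 2
       <= Ctau * RInt (obs_integrand h p q alp alq a b) 0 tau) ->
  Rabs (p - q) >=
    sqrt ((/ (2 * Ctau * tau) * (/ (Cmod alp) ^ 2 + / (Cmod alq) ^ 2))
          / (1 + / 6 * tau ^ 2 * (/ h ^ 2 + 2 * ((Rabs q) ^ 2 + (Rabs p) ^ 2)))).
Proof.
intros Htau Hh _ Hp Hq HC Hobs.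
specialize (Hobs (/ alp)%C (- / alq)%C).
rewrite Cmod_opp, !Cmod_inv, !pow_inv in Hobs by assumption.
rewrite (RInt_ext _ (fun t => (p - q) ^ 2 + (/ h ^ 2 + p * q) * (2 - 2 * cos ((p - q) * t))))
  in Hobs by (intros; apply obs_integrand_inv_coef; assumption).
assert (Hh2 : 0 < / h ^ 2) by (apply Rinv_0_lt_compat, pow_lt; lra).
pose proof (beat_integral_le (/ h ^ 2) p q tau ltac:(lra) ltac:(lra)) as Hint.
rewrite !pow2_abs.
apply Rle_ge, sqrt_scaled_le_Rabs; [nra | |].
- pose proof (pow2_ge_0 p); pose proof (pow2_ge_0 q).
  assert (0 <= tau ^ 2 * (/ h ^ 2 + 2 * (q ^ 2 + p ^ 2)))
    by (apply Rmult_le_pos; [apply pow2_ge_0 | lra]).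
  lra.
- eapply Rle_trans; [exact Hobs |].
  apply Rle_trans with (Ctau * (2 * tau * (1 + / 6 * tau ^ 2 * (/ h ^ 2 + 2 * (q ^ 2 + p ^ 2)))
                                * (p - q) ^ 2)); [apply Rmult_le_compat_l; lra |].
  right; ring.
Qed.
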